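(* Let $G$ be a non-regular simple graph on $n$ vertices, and let $u,v$ be vertices of $G$ with $d_G(u)<d_G(v)$. Let $R:=V(G)\setminus\{u,v\}$, $X:=N(u)\setminus N[v]$, $W:=N(u)\cap N(v)$, and $Z:=\{w\in R: w\notin N(u)\cup N(v)\}$. Let $k$ be an integer with $2\le k\le n-2$. If $k-1\le |X|+|W|+|Z|$, then $F_k(G)$ is non-regular.
   Context: For a simple graph $G=(V,E)$ on $n$ vertices and an integer $1\le k<n$, the $k$-token graph $F_k(G)$ is the graph whose vertices are all $k$-element subsets of $V$, two such subsets $A,B$ being adjacent whenever their symmetric difference $A\triangle B$ is a pair $\{a,b\}$ with $a$ adjacent to $b$ in $G$. $N(x)$ is the set of neighbors of $x$ in $G$, $N[x]=N(x)\cup\{x\}$, and $d_G(x)=|N(x)|$. *)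

From mathcomp Require Import all_boot.
Set Implicit Arguments. Unset Strict Implicit. Unset Printing Implicit Defensive.

(* A simple graph is a symmetric irreflexive relation e on a finType T. *)
Section Graphs.
Variable T : finType.
Variable e : rel T.

Definition nbh (x : T) : {set T} := [set y | e x y].
Definition deg (x : T) : nat := #|nbh x|.

Definition regular : Prop := forall x y : T, deg x = deg y.

Definition token_adj (k : nat) (A B : {set T}) : bool :=
  [&& #|A| == k, #|B| == k &
      [exists a : T, exists b : T,
         e a b && ((A :\: B) :|: (B :\: A) == [set a; b])]].

Definition token_deg (k : nat) (A : {set T}) : nat :=
  #|[set B : {set T} | token_adj k A B]|.

Definition token_regular (k : nat) : Prop :=
  forall A B : {set T}, #|A| = k -> #|B| = k -> token_deg k A = token_deg k B.

End Graphs.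

From mathcomp Require Import all_boot zify.

Set Implicit Arguments.
Unset Strict Implicit.

(* The degree of a k-set A in F_k(G) is the number of edges of G leaving A,
   since the neighbours of A are obtained by moving one token along such an
   edge.  Adding a vertex x outside S changes this cut by d(x) - 2|N(x) ∩ S|.
   Take S ⊆ X ∪ W ∪ Z with |S| = k - 1: then N(v) ∩ S ⊆ N(u) ∩ S, so the cut
   of S + u is strictly smaller than that of S + v, as d(u) < d(v). *)

Lemma subset_of_card (T : finType) (A : {set T}) n :
  n <= #|A| -> exists2 S : {set T}, S \subset A & #|S| = n.
Proof.
case/card_geqP=> s [s_uniq s_size sA].
exists [set x in s]; last by rewrite cardsE (card_uniqP s_uniq).
by apply/subsetP=> x; rewrite inE => /sA.
Qed.

Section TokenGraph.
Variables (T : finType) (e : rel T).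
Hypotheses (e_sym : symmetric e) (e_irr : irreflexive e).

Definition token_move (A : {set T}) (p : T * T) : {set T} := p.2 |: (A :\ p.1).

Definition boundary (A : {set T}) : {set T * T} :=
  [set p | [&& p.1 \in A, p.2 \notin A & e p.1 p.2]].

Definition cut (A : {set T}) : nat := \sum_(a in A) #|nbh e a :\: A|.

Section Move.
Variables (A : {set T}) (a b : T).
Hypotheses (aA : a \in A) (bA : b \notin A).

Lemma token_moveDl : A :\: token_move A (a, b) = [set a].
Proof.
apply/setP=> z; rewrite /token_move /= !inE; case: (eqVneq z a) => [->|_]; rewrite ?aA.
  by rewrite orbF andbT; apply: contraNN bA => /eqP <-.
by case: (z \in A); rewrite ?andbF ?orbT.
Qed.

Lemma token_moveDr : token_move A (a, b) :\: A = [set b].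
Proof.
apply/setP=> z; rewrite /token_move /= !inE; case: (eqVneq z b) => [->|_]; first by rewrite bA.
by case: (z \in A); rewrite ?andbF.
Qed.

Lemma card_token_move : #|token_move A (a, b)| = #|A|.
Proof.
by rewrite /token_move /= cardsU1 !inE (negbTE bA) andbF (cardsD1 a A) aA.
Qed.

Lemma token_moveE (B : {set T}) :
  (A :\: B) :|: (B :\: A) = [set a; b] -> B = token_move A (a, b).
Proof.
move=> symdiffB; apply/setP=> z; move/setP/(_ z): symdiffB; rewrite /token_move /= !inE.
have za : (z == a) ==> (z \in A) by apply/implyP => /eqP->.
have zb : (z == b) ==> (z \notin A) by apply/implyP => /eqP->.
by move: za zb; case: (z == a); case: (z == b); case: (z \in A); case: (z \in B).
Qed.

End Move.

Lemma symdiff_set2_sides (A B : {set T}) a b :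
  #|A| = #|B| -> a != b -> (A :\: B) :|: (B :\: A) = [set a; b] ->
  (a \in A) != (b \in A).
Proof.
move=> cAB ab symdiffAB.
have disjD : (A :\: B) :&: (B :\: A) = set0.
  by apply/setP=> z; rewrite !inE; case: (z \in A); rewrite ?andbF.
have cDAB : #|A :\: B| = #|B :\: A| by rewrite !cardsD setIC cAB.
have le1AB : #|A :\: B| <= 1.
  by have := cardsUI (A :\: B) (B :\: A); rewrite symdiffAB disjD cards0 cards2 ab; lia.
have le1BA : #|B :\: A| <= 1 by rewrite -cDAB.
have inAB z : z \in [set a; b] -> z \in A -> z \in A :\: B.
  by rewrite -symdiffAB !inE => + zA; rewrite zA /= ?andbT ?orbF => ->.
have inBA z : z \in [set a; b] -> z \notin A -> z \in B :\: A.
  by rewrite -symdiffAB !inE => + zA; rewrite (negbTE zA) andbF /=.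
case aA: (a \in A); case bA: (b \in A) => //; exfalso; move/eqP: ab; apply.
- by move/card_le1_eqP: le1AB; apply; apply: inAB; rewrite ?set21 ?set22.
- by move/card_le1_eqP: le1BA; apply; apply: inBA; rewrite ?set21 ?set22 ?aA ?bA.
Qed.

Lemma token_move_inj (A : {set T}) : {in boundary A &, injective (token_move A)}.
Proof.
move=> [a b] [c d]; rewrite !inE /= => /and3P[aA bA _] /and3P[cA dA _] eq_move.
congr pair; apply: set1_inj.
- by rewrite -(token_moveDl aA bA) -(token_moveDl cA dA) eq_move.
- by rewrite -(token_moveDr a bA) -(token_moveDr c dA) eq_move.
Qed.

Lemma token_nbhE (A : {set T}) :
  [set B | token_adj e #|A| A B] = token_move A @: boundary A.
Proof.
apply/setP=> B; rewrite inE; apply/idP/imsetP.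
  case/and3P=> _ /eqP cB /existsP[a /existsP[b /andP[eab /eqP symdiffAB]]].
  have ab : a != b by apply: contraTneq eab => ->; rewrite e_irr.
  have := symdiff_set2_sides (esym cB) ab symdiffAB.
  case: (boolP (a \in A)) => aA /= bA.
    by exists (a, b); rewrite ?(token_moveE aA bA symdiffAB) // inE /= aA bA eab.
  rewrite negbK in bA; rewrite [[set a; b]]setUC in symdiffAB.
  by exists (b, a); rewrite ?(token_moveE bA aA symdiffAB) // inE /= aA bA e_sym eab.
case=> [[a b]]; rewrite inE /= => /and3P[aA bA eab] ->.
rewrite /token_adj card_token_move // !eqxx /=.
apply/existsP; exists a; apply/existsP; exists b.
by rewrite eab token_moveDl // token_moveDr // eqxx.
Qed.

Lemma card_boundary (A : {set T}) : #|boundary A| = cut A.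
Proof.
rewrite /cut -sum1_card.
rewrite (eq_bigr (fun a => \sum_(b in nbh e a :\: A) 1)) => [|a _]; last by rewrite sum1_card.
by rewrite pair_big_dep; apply: eq_bigl => -[a b]; rewrite !inE /= andbCA.
Qed.

Lemma token_deg_cut k (A : {set T}) : #|A| = k -> token_deg e k A = cut A.
Proof.
move=> <-; rewrite /token_deg token_nbhE card_in_imset ?card_boundary //.
exact: token_move_inj.
Qed.

Lemma cut_setU1 (S : {set T}) x : x \notin S ->
  cut (x |: S) + 2 * #|nbh e x :&: S| = cut S + deg e x.
Proof.
move=> xS; rewrite /cut big_setU1 //=.
have nbhxD : nbh e x :\: (x |: S) = nbh e x :\: S.
  by apply/setP=> z; rewrite !inE; case: eqP => [->|] //=; rewrite e_irr andbF.
have nbhaD a : #|nbh e a :\: S| = e a x + #|nbh e a :\: (x |: S)|.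
  by rewrite (cardsD1 x) !inE (negbTE xS) /= setDDl setUC.
have nbhxS : \sum_(a in S) e a x = #|nbh e x :&: S|.
  rewrite -sum1_card big_mkcond [RHS]big_mkcond /=; apply: eq_bigr => a _.
  by rewrite !inE e_sym; case: (a \in S); case: (e x a).
rewrite (eq_bigr _ (fun a _ => nbhaD a)) big_split /= nbhxS nbhxD.
have := cardsID S (nbh e x); rewrite /deg; lia.
Qed.

End TokenGraph.

Theorem lemma2 (T : finType) (e : rel T)
  (e_sym : symmetric e) (e_irr : irreflexive e)
  (nonreg : ~ regular e) (u v : T) (huv : deg e u < deg e v)
  (k : nat) (hk2 : 2 <= k) (hkn : k <= #|T| - 2)
  (hX : k - 1 <= #|[set x | e u x & ~~ e v x && (x != v)]|
                 + #|[set x | e u x & e v x]|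
                 + #|[set w | [&& w != u, w != v, ~~ e u w & ~~ e v w]]|) :
  ~ token_regular e k.
Proof.
move=> token_reg.
pose U := [set y | [&& y != u, y != v & e v y ==> e u y]].
have cU : k - 1 <= #|U|.
  apply: (leq_trans hX); rewrite -!sum1_card !(big_mkcond (fun y => y \in _)) -!big_split /=.
  apply: leq_sum => y _; rewrite !inE.
  case: (eqVneq y u) => [->|_]; first by rewrite e_irr.
  case: (eqVneq y v) => [->|_]; first by rewrite e_irr andbF.
  by case: (e u y); case: (e v y).
have [S SU cS] := subset_of_card cU.
have inU y : y \in S -> [&& y != u, y != v & e v y ==> e u y].
  by move/(subsetP SU); rewrite inE.
have uS : u \notin S by apply/negP => /inU; rewrite eqxx.
have vS : v \notin S by apply/negP => /inU; rewrite eqxx andbF.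
have nbhS : #|nbh e v :&: S| <= #|nbh e u :&: S|.
  apply/subset_leq_card/subsetP => y; rewrite !inE => /andP[evy yS].
  by have /and3P[_ _] := inU y yS; rewrite evy yS andbT.
have cuS : #|u |: S| = k by rewrite cardsU1 uS cS; lia.
have cvS : #|v |: S| = k by rewrite cardsU1 vS cS; lia.
have := token_reg _ _ cuS cvS.
rewrite (token_deg_cut e_sym e_irr cuS) (token_deg_cut e_sym e_irr cvS).
have := cut_setU1 e_sym e_irr uS; have := cut_setU1 e_sym e_irr vS; lia.
Qed.
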